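(* Let $0<q<\infty$ and $\frac{q}{q+1}<p<\infty$, and let $r=\frac{pq}{pq+p-q}$. Then $$\frac{\sin_{p,q}x}{x}<\left(\frac{p+r\cos_{p,q}^p x}{p+r}\right)^{1/q} \quad \text{for all } x\in\left(0,\tfrac{\pi_{p,q}}{2}\right),$$ and $$\frac{\sinh_{p,q}x}{x}<\left(\frac{p+r\cosh_{p,q}^p x}{p+r}\right)^{1/q} \quad \text{for all } x\in\left(0,\tfrac{\pi_{r,q}}{2}\right).$$
   Context: For $0<q<\infty$ and $\frac{q}{q+1}<p<\infty$: let $F_{p,q}(y)=\int_0^y (1-t^q)^{-1/p}\,dt$ for $y\in[0,1)$ and $\pi_{p,q}=2\int_0^1(1-t^q)^{-1/p}\,dt\in(0,\infty]$ (it equals $\infty$ when $p\le 1$). The function $\sin_{p,q}:[0,\pi_{p,q}/2)\to[0,1)$ is the inverse of $F_{p,q}$ and $\cos_{p,q}x=\frac{d}{dx}\sin_{p,q}x$. Let $G_{p,q}(y)=\int_0^y(1+t^q)^{-1/p}\,dt$ for $y\in[0,\infty)$; its range is $[0,\pi_{r,q}/2)$ with $r=\frac{pq}{pq+p-q}$ (which also satisfies $\frac{q}{q+1}<r<\infty$). The function $\sinh_{p,q}:[0,\pi_{r,q}/2)\to[0,\infty)$ is the inverse of $G_{p,q}$ and $\cosh_{p,q}x=\frac{d}{dx}\sinh_{p,q}x$. *)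

From Stdlib Require Import Reals ClassicalEpsilon.
From Coquelicot Require Import Coquelicot.
Open Scope R_scope.

(* real power x^a for x >= 0 (with 0^a = 0, used only for a > 0 at x = 0) *)
Definition rpow (x a : R) : R := if Rlt_dec 0 x then Rpower x a else 0.

Definition F_pq (p q y : R) : R :=
  RInt (fun t => rpow (1 - rpow t q) (- (1 / p))) 0 y.

Definition G_pq (p q y : R) : R :=
  RInt (fun t => rpow (1 + rpow t q) (- (1 / p))) 0 y.

(* pi_{p,q}/2 = \int_0^1 (1-t^q)^(-1/p) dt in [0,+oo], i.e. sup_{y in [0,1)} F_{p,q}(y)
   (integrand nonnegative, so the improper integral is this supremum). *)
Definition half_pi_pq (p q : R) : Rbar :=
  Lub_Rbar (fun z => exists y, 0 <= y < 1 /\ z = F_pq p q y).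

Definition sin_pq (p q x : R) : R :=
  epsilon (inhabits 0) (fun y => 0 <= y < 1 /\ F_pq p q y = x).

Definition cos_pq (p q x : R) : R := Derive (sin_pq p q) x.

(* sinh_{p,q} = inverse of G_{p,q} : [0,oo) -> [0, pi_{r,q}/2) *)
Definition sinh_pq (p q x : R) : R :=
  epsilon (inhabits 0) (fun y => 0 <= y /\ G_pq p q y = x).

Definition cosh_pq (p q x : R) : R := Derive (sinh_pq p q) x.

Definition r_pq (p q : R) : R := p * q / (p * q + p - q).

(* Write x = F(s), where F(y) = int_0^y (1 + c t^q)^(-1/p) dt with c = -1 for sin_{p,q} and
   c = 1 for sinh_{p,q}.  By the inverse function rule the p-th power of the derivative at x
   is 1 + c s^q, so (p + r cos^p x) / (p + r) = 1 + c k s^q with k = r / (p + r) = q / (p (q + 1)),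
   and the claim becomes s (1 + c k s^q)^(-1/q) < F(s).  Both sides vanish at s = 0, and since
   -1/q - 1 = -(1/p)/k, Bernoulli's inequality (1 + w)^k < 1 + k w makes the derivative of the
   left side, (1 + c k s^q)^(-(1/p)/k), smaller than F'(s) = (1 + c s^q)^(-1/p).  For sinh_{p,q}
   the range condition x < pi_{r,q}/2 is transported by the substitution t |-> t (1 - t^q)^(-1/q),
   which turns F_{r,q} into G_{p,q}. *)

From Stdlib Require Import Reals Ranalysis5 Lra Classical ClassicalEpsilon.
From Coquelicot Require Import Coquelicot.
Open Scope R_scope.

Lemma rpow_Rpower x a : 0 < x -> rpow x a = Rpower x a.
Proof. unfold rpow; intros Hx; destruct (Rlt_dec 0 x); [reflexivity|lra]. Qed.

Lemma rpow_nonpos x a : x <= 0 -> rpow x a = 0.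
Proof. unfold rpow; intros Hx; destruct (Rlt_dec 0 x); [lra|reflexivity]. Qed.

Lemma rpow_gt0 x a : 0 < x -> 0 < rpow x a.
Proof. intros Hx; rewrite rpow_Rpower by exact Hx; apply exp_pos. Qed.

Lemma rpow_ge0 x a : 0 <= rpow x a.
Proof.
  destruct (Rlt_dec 0 x) as [Hx|Hx]; [now apply Rlt_le, rpow_gt0|].
  rewrite rpow_nonpos; lra.
Qed.

Lemma rpow_1_l a : rpow 1 a = 1.
Proof. rewrite rpow_Rpower by lra; unfold Rpower; rewrite ln_1, Rmult_0_r; apply exp_0. Qed.

Lemma rpow_1_r x : 0 < x -> rpow x 1 = x.
Proof. intros Hx; rewrite rpow_Rpower by exact Hx; exact (Rpower_1 x Hx). Qed.

Lemma rpow_plus x a b : 0 < x -> rpow x (a + b) = rpow x a * rpow x b.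
Proof. intros Hx; rewrite !rpow_Rpower by exact Hx; apply Rpower_plus. Qed.

Lemma rpow_mult x a b : 0 < x -> rpow (rpow x a) b = rpow x (a * b).
Proof.
  intros Hx; rewrite (rpow_Rpower (rpow x a)) by now apply rpow_gt0.
  rewrite !rpow_Rpower by exact Hx; apply Rpower_mult.
Qed.

Lemma rpow_mult_distr x y a : 0 < x -> 0 < y -> rpow (x * y) a = rpow x a * rpow y a.
Proof.
  intros Hx Hy; rewrite !rpow_Rpower by (try apply Rmult_lt_0_compat; assumption).
  now rewrite Rpower_mult_distr.
Qed.

Lemma rpow_opp x a : 0 < x -> rpow x (- a) = / rpow x a.
Proof. intros Hx; rewrite !rpow_Rpower by exact Hx; apply Rpower_Ropp. Qed.

Lemma rpow_pred x a : 0 < x -> rpow x a = rpow x (a - 1) * x.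
Proof.
  intros Hx; rewrite <- (rpow_1_r x Hx) at 3; rewrite <- rpow_plus by exact Hx.
  f_equal; ring.
Qed.

Lemma rpow_le_compat x y a : 0 < a -> x <= y -> rpow x a <= rpow y a.
Proof.
  intros Ha Hxy; destruct (Rle_dec x 0) as [Hx|Hx].
  - rewrite (rpow_nonpos x) by exact Hx; apply rpow_ge0.
  - rewrite !rpow_Rpower by lra; apply Rle_Rpower_l; lra.
Qed.

Lemma rpow_lt_compat x y a : 0 < a -> 0 <= x < y -> rpow x a < rpow y a.
Proof.
  intros Ha [[Hx|<-] Hxy]; [|rewrite rpow_nonpos by lra; apply rpow_gt0; lra].
  rewrite !rpow_Rpower by lra; apply Rlt_Rpower_l; lra.
Qed.

Lemma rpow_lt_1 x a : 0 < a -> x < 1 -> rpow x a < 1.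
Proof.
  intros Ha Hx; destruct (Rle_dec x 0) as [Hx0|Hx0]; [rewrite rpow_nonpos; lra|].
  rewrite <- (rpow_1_l a); apply rpow_lt_compat; lra.
Qed.

Lemma is_derive_continuity_pt (f : R -> R) x l : is_derive f x l -> continuity_pt f x.
Proof.
  intros Hf; apply continuity_pt_filterlim, (ex_derive_continuous (V := R_NormedModule)).
  now exists l.
Qed.

Lemma is_derive_rpow x a : 0 < x -> is_derive (fun y => rpow y a) x (a * rpow x (a - 1)).
Proof.
  intros Hx; rewrite (rpow_Rpower x) by exact Hx.
  apply is_derive_ext_loc with (fun y => Rpower y a).
  - apply filter_imp with (2 := open_gt 0 x Hx); intros y Hy; now rewrite rpow_Rpower.
  - now apply is_derive_Reals, derivable_pt_lim_power.
Qed.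

Lemma continuity_pt_rpow x a : 0 < x -> continuity_pt (fun y => rpow y a) x.
Proof. intros Hx; exact (is_derive_continuity_pt _ _ _ (is_derive_rpow x a Hx)). Qed.

Lemma continuity_rpow a : 0 < a -> continuity (fun y => rpow y a).
Proof.
  intros Ha x; destruct (Rtotal_order x 0) as [Hx|[->|Hx]].
  - apply is_derive_continuity_pt with 0, is_derive_ext_loc with (fun _ => 0).
    + apply filter_imp with (2 := open_lt 0 x Hx); intros y Hy; rewrite rpow_nonpos; lra.
    + apply (is_derive_const (K := R_AbsRing) (V := R_NormedModule)).
  - (* rpow y a < eps as soon as 0 < y < eps^(1/a) *)
    intros eps Heps; exists (rpow eps (1 / a)); split; [now apply rpow_gt0|].
    intros y [_ Hy]; simpl in *; unfold R_dist in *.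
    rewrite (rpow_nonpos 0), !Rminus_0_r in * by lra.
    destruct (Rle_dec y 0) as [Hy0|Hy0]; [rewrite rpow_nonpos, Rabs_R0; lra|].
    rewrite Rabs_pos_eq in * by (try apply rpow_ge0; lra).
    replace eps with (rpow (rpow eps (1 / a)) a)
      by (rewrite rpow_mult, <- rpow_1_r by lra; f_equal; field; lra).
    apply rpow_lt_compat; lra.
  - now apply continuity_pt_rpow.
Qed.

Lemma MVT_is_derive (f df : R -> R) a b : a < b ->
  (forall x, a <= x <= b -> continuity_pt f x) ->
  (forall x, a < x < b -> is_derive f x (df x)) ->
  exists c, a < c < b /\ f b - f a = df c * (b - a).
Proof.
  intros Hab Hc Hd.
  pose (pr := fun c (Hc : a < c < b) =>
     exist (fun l => derivable_pt_lim f c l) (df c) (proj1 (is_derive_Reals _ _ _) (Hd c Hc))).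
  destruct (MVT f id a b pr (fun c _ => derivable_pt_id c) Hab Hc
     (fun c _ => derivable_continuous_pt _ _ (derivable_pt_id c))) as [c [Pc HP]].
  exists c; split; [exact Pc|].
  rewrite derive_pt_id in HP; simpl in HP; unfold id in HP; lra.
Qed.

Lemma is_derive_pos_lt (f df : R -> R) a b : a < b ->
  (forall x, a <= x <= b -> continuity_pt f x) ->
  (forall x, a < x < b -> is_derive f x (df x)) ->
  (forall x, a < x < b -> 0 < df x) -> f a < f b.
Proof.
  intros Hab Hc Hd Hp; destruct (MVT_is_derive f df a b Hab Hc Hd) as [c [Pc Hf]].
  specialize (Hp c Pc); nra.
Qed.

Lemma is_derive_zero_eq (f df : R -> R) a b : a < b ->
  (forall x, a <= x <= b -> continuity_pt f x) ->
  (forall x, a < x < b -> is_derive f x (df x)) ->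
  (forall x, a < x < b -> df x = 0) -> f a = f b.
Proof.
  intros Hab Hc Hd H0; destruct (MVT_is_derive f df a b Hab Hc Hd) as [c [Pc Hf]].
  rewrite (H0 c Pc) in Hf; lra.
Qed.

Lemma is_derive_left_inverse (f g df : R -> R) l u y :
  l < y < u ->
  (forall t, l <= t <= u -> is_derive f t (df t)) ->
  (forall t, l <= t <= u -> 0 < df t) ->
  (forall t, l <= t <= u -> g (f t) = t) ->
  is_derive g (f y) (/ df y).
Proof.
  intros Hy Hd Hpos Hgf.
  assert (Hcont : forall t, l <= t <= u -> continuity_pt f t)
    by (intros t Ht; exact (is_derive_continuity_pt _ _ _ (Hd t Ht))).
  assert (Hincr : forall s t, l <= s -> s < t -> t <= u -> f s < f t).
  { intros s t Hs Hst Ht; apply (is_derive_pos_lt f df); try assumption;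
      intros; [apply Hcont | apply Hd | apply Hpos]; lra. }
  assert (Hrange : forall z, f l <= z <= f u -> l <= g z <= u /\ f (g z) = z).
  { intros z [Hl Hu].
    destruct (Rle_lt_or_eq_dec _ _ Hl) as [Hl' | <-]; [|rewrite Hgf; lra].
    destruct (Rle_lt_or_eq_dec _ _ Hu) as [Hu' | ->]; [|rewrite Hgf; lra].
    destruct (IVT_interv (fun t => f t - z) l u) as [t [Ht Hft]]; try lra.
    { intros t Ht; apply continuity_pt_minus; [now apply Hcont | apply continuity_pt_const].
      now intros ? ?. }
    replace z with (f t) by lra; rewrite Hgf; lra. }
  assert (Hfy : f l < f y < f u) by (split; apply Hincr; lra).
  assert (Hgc : continuity_pt g (f y)).
  { apply (continuity_pt_recip_interv f g l u); try lra; try assumption.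
    - intros z Hl Hu; refine (proj2 (Hrange z _)); lra.
    - intros z Hl Hu; refine (proj1 (Hrange z _)); lra. }
  assert (Prf : forall t, g (f l) <= t <= g (f u) -> derivable_pt f t).
  { intros t Ht; rewrite !Hgf in Ht by lra.
    exists (df t); apply is_derive_Reals, Hd, Ht. }
  assert (Hgy : g (f l) <= g (f y) <= g (f u)) by (rewrite !Hgf; lra).
  assert (Hdy : derive_pt f (g (f y)) (Prf _ Hgy) = df y).
  { apply derive_pt_eq_0; rewrite Hgf by lra; apply is_derive_Reals, Hd; lra. }
  apply is_derive_Reals; unfold Rdiv; rewrite <- Rmult_1_l, <- Hdy.
  apply (derivable_pt_lim_recip_interv f g (f l) (f u) (f y) Prf Hgc); try lra.
  - intros z Hz; exact (proj2 (Hrange z Hz)).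
  - rewrite Hdy; specialize (Hpos y); lra.
Qed.

Definition base (q c t : R) : R := 1 + c * rpow t q.

Definition Fint (q c a y : R) : R := RInt (fun t => rpow (base q c t) a) 0 y.

Section Integral.

Variables q c a : R.
Hypothesis hq : 0 < q.

Lemma base_0 : base q c 0 = 1.
Proof. unfold base; rewrite rpow_nonpos; lra. Qed.

Lemma base_pos_le s t : s <= t -> 0 < base q c t -> 0 < base q c s.
Proof.
  unfold base; intros Hst Ht; destruct (Rle_dec 0 c).
  - pose proof (rpow_ge0 s q); nra.
  - pose proof (rpow_le_compat s t q hq Hst); nra.
Qed.

Lemma continuity_base : continuity (base q c).
Proof.
  intros t; apply continuity_pt_plus; [now apply continuity_pt_const; intros ? ?|].
  apply continuity_pt_scal with (f := fun t => rpow t q), continuity_rpow, hq.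
Qed.

Lemma base_pos_locally y : 0 < base q c y -> locally y (fun t => 0 < base q c t).
Proof.
  intros Hy; apply (proj1 (continuity_pt_filterlim _ _) (continuity_base y)).
  exact (open_gt 0 _ Hy).
Qed.

Lemma base_pos_exists_gt y : 0 < base q c y -> exists u, y < u /\ 0 < base q c u.
Proof.
  intros Hy; destruct (base_pos_locally y Hy) as [eps Heps].
  exists (y + eps / 2); split; [pose proof (cond_pos eps); lra|].
  apply Heps; change (Rabs (y + eps / 2 - y) < eps).
  rewrite Rabs_pos_eq; pose proof (cond_pos eps); lra.
Qed.

Lemma continuity_pt_integrand y :
  0 < base q c y -> continuity_pt (fun t => rpow (base q c t) a) y.
Proof.
  intros Hy; apply (continuity_pt_comp (base q c) (fun w => rpow w a)).
  - apply continuity_base.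
  - now apply continuity_pt_rpow.
Qed.

Lemma is_derive_Fint y : 0 < base q c y -> is_derive (Fint q c a) y (rpow (base q c y) a).
Proof.
  intros Hy.
  apply (is_derive_RInt (V := R_CompleteNormedModule) (fun t => rpow (base q c t) a) _ 0).
  - apply filter_imp with (2 := base_pos_locally y Hy); intros z Hz.
    apply (RInt_correct (V := R_CompleteNormedModule)).
    apply (ex_RInt_continuous (V := R_CompleteNormedModule)).
    intros t Ht; apply continuity_pt_filterlim, continuity_pt_integrand.
    apply base_pos_le with (Rmax 0 z); [apply Ht|].
    unfold Rmax; destruct (Rle_dec 0 z); [exact Hz | rewrite base_0; lra].
  - now apply continuity_pt_filterlim, continuity_pt_integrand.
Qed.

Lemma continuity_pt_Fint y : 0 < base q c y -> continuity_pt (Fint q c a) y.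
Proof. intros Hy; exact (is_derive_continuity_pt _ _ _ (is_derive_Fint y Hy)). Qed.

Lemma Fint_0 : Fint q c a 0 = 0.
Proof. apply (RInt_point (V := R_CompleteNormedModule)). Qed.

Lemma Fint_lt s t : s < t -> 0 < base q c t -> Fint q c a s < Fint q c a t.
Proof.
  intros Hst Ht; apply (is_derive_pos_lt _ (fun y => rpow (base q c y) a)); try exact Hst;
    intros y Hy; assert (Hby : 0 < base q c y) by (apply base_pos_le with t; [lra | exact Ht]).
  - now apply continuity_pt_Fint.
  - now apply is_derive_Fint.
  - now apply rpow_gt0.
Qed.

Lemma Fint_inj s t : 0 < base q c s -> 0 < base q c t -> Fint q c a s = Fint q c a t -> s = t.
Proof.
  intros Hs Ht Hst; destruct (Rtotal_order s t) as [H|[H|H]]; [|exact H|].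
  - pose proof (Fint_lt s t H Ht); lra.
  - pose proof (Fint_lt t s H Hs); lra.
Qed.

Lemma Fint_ivt x y : 0 < x < Fint q c a y -> 0 < base q c y ->
  exists s, 0 < s < y /\ Fint q c a s = x.
Proof.
  intros Hx Hy.
  assert (Hy0 : 0 < y).
  { destruct (Rtotal_order y 0) as [H|[H|H]]; [|subst y; rewrite Fint_0 in Hx; lra|exact H].
    pose proof (Fint_lt y 0 H ltac:(rewrite base_0; lra)); rewrite Fint_0 in *; lra. }
  destruct (IVT_interv (fun t => Fint q c a t - x) 0 y) as [s [Hs Hfs]];
    try (rewrite ?Fint_0; lra).
  - intros t Ht; apply continuity_pt_minus; [|now apply continuity_pt_const; intros ? ?].
    apply continuity_pt_Fint, base_pos_le with y; [apply Ht | exact Hy].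
  - exists s; repeat split; [| |lra].
    + destruct Hs as [[Hs0 | <-] _]; [exact Hs0 | rewrite Fint_0 in Hfs; lra].
    + destruct Hs as [_ [Hsy | ->]]; [exact Hsy | lra].
Qed.

Lemma is_derive_Fint_inverse (g : R -> R) s :
  (forall y, 0 <= y -> 0 < base q c y -> g (Fint q c a y) = y) ->
  0 < s -> 0 < base q c s ->
  is_derive g (Fint q c a s) (/ rpow (base q c s) a).
Proof.
  intros Hg Hs Hbs; destruct (base_pos_exists_gt s Hbs) as [u [Hsu Hu]].
  apply (is_derive_left_inverse (Fint q c a) g (fun y => rpow (base q c y) a) 0 u s);
    [lra | | |]; intros t Ht;
    assert (Hbt : 0 < base q c t) by (apply base_pos_le with u; [apply Ht | exact Hu]).
  - now apply is_derive_Fint.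
  - now apply rpow_gt0.
  - apply Hg; [apply Ht | exact Hbt].
Qed.

End Integral.

Definition hmap (q m t : R) : R := t * rpow (base q m t) (- (1 / q)).

Lemma continuity_pt_hmap q m t : 0 < q -> 0 < base q m t -> continuity_pt (hmap q m) t.
Proof.
  intros Hq Ht; apply continuity_pt_mult with (f1 := fun t => t); [apply continuity_pt_id|].
  now apply (continuity_pt_integrand q m (- (1 / q))).
Qed.

Lemma is_derive_base q m t : 0 < t -> is_derive (base q m) t (m * (q * rpow t (q - 1))).
Proof.
  intros Ht; unfold base.
  apply is_derive_ext with (fun t => 1 + m * rpow t q); [reflexivity|].
  rewrite <- (Rplus_0_l (m * _)).
  apply (is_derive_plus (fun _ => 1) (fun t => m * rpow t q)).
  - apply (is_derive_const (K := R_AbsRing) (V := R_NormedModule)).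
  - apply (is_derive_scal (fun t => rpow t q)), is_derive_rpow, Ht.
Qed.

Lemma is_derive_hmap q m t : 0 < q -> 0 < t -> 0 < base q m t ->
  is_derive (hmap q m) t (rpow (base q m t) (- (1 / q) - 1)).
Proof.
  intros Hq Ht Hb; unfold hmap.
  pose proof (is_derive_comp (fun w => rpow w (- (1 / q))) (base q m) t _ _
    (is_derive_rpow _ _ Hb) (is_derive_base q m t Ht)) as Hpow.
  pose proof (is_derive_mult (fun t => t) _ t 1 _ (is_derive_id t) Hpow Rmult_comm) as Hprod.
  match type of Hprod with is_derive _ _ ?v => replace (rpow _ _) with v end; [exact Hprod|].
  change (1 * rpow (base q m t) (- (1 / q)) + t * (m * (q * rpow t (q - 1)) *
    (- (1 / q) * rpow (base q m t) (- (1 / q) - 1))) = rpow (base q m t) (- (1 / q) - 1)).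
  rewrite (rpow_pred (base q m t)) by exact Hb.
  unfold base; rewrite (rpow_pred t q) by exact Ht; field; lra.
Qed.

Lemma Rpower_lt_bernoulli u k : -1 < u -> u <> 0 -> 0 < k < 1 -> Rpower (1 + u) k < 1 + k * u.
Proof.
  intros Hu Hu0 Hk; unfold Rpower; set (L := ln (1 + u)).
  assert (HL : exp L = 1 + u) by (apply exp_ln; lra).
  assert (HL0 : L <> 0) by (intros E; rewrite E, exp_0 in HL; lra).
  (* the tangent line of exp at k L lies below exp at L and at 0 *)
  assert (Htan : forall y, y <> k * L -> exp (k * L) * (1 + (y - k * L)) < exp y).
  { intros y Hy; replace (exp y) with (exp (k * L) * exp (y - k * L))
      by (rewrite <- exp_plus; f_equal; ring).
    apply Rmult_lt_compat_l; [apply exp_pos | apply exp_ineq1; lra]. }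
  assert (H1 : L <> k * L) by (intros E; apply HL0; nra).
  assert (H0 : 0 <> k * L) by (intros E; apply HL0; nra).
  pose proof (Htan L H1) as HtL; pose proof (Htan 0 H0) as Ht0.
  rewrite exp_0, HL in *; set (E := exp (k * L)) in *. nra.
Qed.

Lemma rpow_lt_bernoulli_opp w k b : -1 < w -> w <> 0 -> 0 < k < 1 -> 0 < b ->
  rpow (1 + k * w) (- (b / k)) < rpow (1 + w) (- b).
Proof.
  intros Hw Hw0 Hk Hb; assert (Hkw : 0 < 1 + k * w) by nra.
  rewrite !rpow_opp by lra.
  apply Rinv_lt_contravar; [apply Rmult_lt_0_compat; apply rpow_gt0; lra|].
  replace b with (k * (b / k)) at 1 by (field; lra).
  rewrite <- rpow_mult by lra; apply rpow_lt_compat; [apply Rdiv_lt_0_compat; lra|].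
  split; [apply rpow_ge0|]; rewrite rpow_Rpower by lra; now apply Rpower_lt_bernoulli.
Qed.

Lemma base_1_pos q y : 0 < base q 1 y.
Proof. unfold base; pose proof (rpow_ge0 y q); lra. Qed.

Lemma base_scale_pos q c k t : 0 < k < 1 -> 0 < base q c t -> 0 < base q (c * k) t.
Proof.
  unfold base; intros Hk Ht; pose proof (rpow_ge0 t q).
  destruct (Rle_dec 0 c); nra.
Qed.

Lemma base_hmap q c m t : 0 < q -> 0 < t -> 0 < base q m t -> c = - m ->
  base q c (hmap q m t) = / base q m t.
Proof.
  intros Hq Ht Hb ->; unfold hmap.
  assert (Hpow : rpow (t * rpow (base q m t) (- (1 / q))) q = rpow t q / base q m t).
  { rewrite rpow_mult_distr, rpow_mult by (try apply rpow_gt0; assumption).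
    replace (- (1 / q) * q) with (- (1)) by (field; lra).
    rewrite rpow_opp, rpow_1_r by exact Hb; reflexivity. }
  unfold base at 1; rewrite Hpow; unfold base in *; field; lra.
Qed.

Section Comparison.

Variables p q : R.
Hypothesis hq : 0 < q.
Hypothesis hp : q / (q + 1) < p.

Let r := r_pq p q.
Let k := r / (p + r).

Lemma r_pq_denom_pos : 0 < p * q + p - q.
Proof.
  apply Rmult_lt_compat_r with (r := q + 1) in hp; [|lra].
  unfold Rdiv in hp; rewrite Rmult_assoc, Rinv_l, Rmult_1_r in hp; lra.
Qed.

Lemma p_pos : 0 < p.
Proof. pose proof r_pq_denom_pos; nra. Qed.

Lemma r_pq_pos : 0 < r.
Proof.
  pose proof r_pq_denom_pos; pose proof p_pos.
  unfold r, r_pq; apply Rdiv_lt_0_compat; nra.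
Qed.

Lemma k_bounds : 0 < k < 1.
Proof.
  pose proof r_pq_pos; pose proof p_pos; unfold k; split.
  - apply Rdiv_lt_0_compat; lra.
  - apply Rmult_lt_reg_r with (p + r); [lra|]; unfold Rdiv; rewrite Rmult_assoc, Rinv_l; lra.
Qed.

Lemma k_exponent : - (1 / q) - 1 = - ((1 / p) / k).
Proof.
  pose proof r_pq_denom_pos; pose proof p_pos.
  unfold k, r, r_pq; field; repeat split; nra.
Qed.

Lemma r_exponent : - (1 / q) - 1 + - (1) * - (1 / p) = - (1 / r).
Proof.
  pose proof r_pq_denom_pos; pose proof p_pos.
  unfold r, r_pq; field; repeat split; nra.
Qed.

Lemma hmap_lt_Fint c s : c <> 0 -> 0 < s -> 0 < base q c s ->
  hmap q (c * k) s < Fint q c (- (1 / p)) s.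
Proof.
  intros Hc Hs Hbs; pose proof p_pos; pose proof k_bounds.
  assert (Hb : forall t, t <= s -> 0 < base q c t /\ 0 < base q (c * k) t).
  { intros t Ht; assert (0 < base q c t) by (now apply base_pos_le with s).
    split; [assumption | now apply base_scale_pos]. }
  enough (Hcomp : Fint q c (- (1 / p)) 0 - hmap q (c * k) 0 <
                  Fint q c (- (1 / p)) s - hmap q (c * k) s)
    by (rewrite Fint_0 in Hcomp; unfold hmap at 1 in Hcomp; lra).
  apply (is_derive_pos_lt (fun t => Fint q c (- (1 / p)) t - hmap q (c * k) t)
    (fun t => rpow (base q c t) (- (1 / p)) - rpow (base q (c * k) t) (- (1 / q) - 1)));
    [exact Hs | | |]; intros t Ht; destruct (Hb t ltac:(lra)) as [Hbt Hbkt].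
  - apply continuity_pt_minus; [now apply continuity_pt_Fint | now apply continuity_pt_hmap].
  - apply (is_derive_minus (Fint q c (- (1 / p))) (hmap q (c * k)));
      [now apply is_derive_Fint | apply is_derive_hmap; lra || assumption].
  - assert (Hw : c * rpow t q <> 0)
      by (apply Rmult_integral_contrapositive_currified; [|apply Rgt_not_eq, rpow_gt0]; lra).
    replace (base q (c * k) t) with (1 + k * (c * rpow t q)) by (unfold base; ring).
    rewrite k_exponent; unfold base in *.
    enough (rpow (1 + k * (c * rpow t q)) (- (1 / p / k)) < rpow (1 + c * rpow t q) (- (1 / p)))
      by lra.
    apply rpow_lt_bernoulli_opp; try assumption; [lra | apply Rdiv_lt_0_compat; lra].
Qed.

Lemma ratio_lt_cos_bound (g : R -> R) c s : c <> 0 ->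
  (forall y, 0 <= y -> 0 < base q c y -> g (Fint q c (- (1 / p)) y) = y) ->
  0 < s -> 0 < base q c s ->
  g (Fint q c (- (1 / p)) s) / Fint q c (- (1 / p)) s <
  rpow ((p + r_pq p q * rpow (Derive g (Fint q c (- (1 / p)) s)) p) / (p + r_pq p q)) (1 / q).
Proof.
  intros Hc Hg Hs Hbs.
  pose proof p_pos as Hp; pose proof r_pq_pos as Hr; pose proof k_bounds as Hk.
  assert (Hcos : rpow (Derive g (Fint q c (- (1 / p)) s)) p = base q c s).
  { rewrite (is_derive_unique _ _ _ (is_derive_Fint_inverse q c _ hq g s Hg Hs Hbs)).
    rewrite rpow_opp, Rinv_inv, rpow_mult by exact Hbs.
    replace (1 / p * p) with 1 by (field; lra); now apply rpow_1_r. }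
  set (x := Fint q c (- (1 / p)) s) in *.
  assert (Hx : 0 < x) by (rewrite <- (Fint_0 q c (- (1 / p))); now apply Fint_lt).
  assert (Hbase : (p + r * base q c s) / (p + r) = base q (c * k) s)
    by (unfold base, k; field; lra).
  assert (Hbk : 0 < base q (c * k) s) by now apply base_scale_pos.
  assert (Hgx : g x = s) by (apply Hg; lra).
  fold r; rewrite Hgx, Hcos, Hbase.
  pose proof (hmap_lt_Fint c s Hc Hs Hbs) as Hlt; fold x in Hlt; unfold hmap in Hlt.
  rewrite rpow_opp in Hlt by exact Hbk.
  apply Rlt_div_l; [exact Hx|]; rewrite Rmult_comm.
  apply Rlt_div_l; [now apply rpow_gt0 | exact Hlt].
Qed.

Lemma Fint_hmap y : 0 <= y -> 0 < base q (-1) y ->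
  Fint q 1 (- (1 / p)) (hmap q (-1) y) = Fint q (-1) (- (1 / r)) y.
Proof.
  intros Hy Hby; destruct (Rle_lt_or_eq_dec _ _ Hy) as [Hy0 | <-].
  2:{ unfold hmap; rewrite Rmult_0_l, !Fint_0; reflexivity. }
  assert (Hb : forall t, t <= y -> 0 < base q (-1) t)
    by (intros t Ht; now apply base_pos_le with y).
  enough (Hdiff : Fint q 1 (- (1 / p)) (hmap q (-1) 0) - Fint q (-1) (- (1 / r)) 0 =
                  Fint q 1 (- (1 / p)) (hmap q (-1) y) - Fint q (-1) (- (1 / r)) y)
    by (unfold hmap at 1 in Hdiff; rewrite Rmult_0_l, !Fint_0 in Hdiff; lra).
  apply (is_derive_zero_eq
    (fun t => Fint q 1 (- (1 / p)) (hmap q (-1) t) - Fint q (-1) (- (1 / r)) t)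
    (fun t => rpow (base q (-1) t) (- (1 / q) - 1) * rpow (base q 1 (hmap q (-1) t)) (- (1 / p))
              - rpow (base q (-1) t) (- (1 / r)))); [exact Hy0| | |];
    intros t Ht; assert (Hbt : 0 < base q (-1) t) by (apply Hb; lra).
  - apply continuity_pt_minus; [|now apply continuity_pt_Fint].
    apply (continuity_pt_comp (hmap q (-1))); [now apply continuity_pt_hmap|].
    apply (continuity_pt_Fint q 1 _ hq), base_1_pos.
  - apply (is_derive_minus (fun t => Fint q 1 (- (1 / p)) (hmap q (-1) t)));
      [|now apply is_derive_Fint].
    apply (is_derive_comp (Fint q 1 (- (1 / p))) (hmap q (-1)));
      [apply (is_derive_Fint q 1 _ hq), base_1_pos | apply is_derive_hmap; lra || assumption].
  - rewrite (base_hmap q 1 (-1) t) by (lra || assumption).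
    replace (/ base q (-1) t) with (rpow (base q (-1) t) (- (1)))
      by (rewrite rpow_opp, rpow_1_r; trivial).
    rewrite rpow_mult, <- rpow_plus, r_exponent by exact Hbt; ring.
Qed.

End Comparison.

Lemma F_pq_Fint p q y : F_pq p q y = Fint q (-1) (- (1 / p)) y.
Proof.
  apply (RInt_ext (V := R_CompleteNormedModule)); intros t _.
  unfold base; f_equal; ring.
Qed.

Lemma G_pq_Fint p q y : G_pq p q y = Fint q 1 (- (1 / p)) y.
Proof.
  apply (RInt_ext (V := R_CompleteNormedModule)); intros t _.
  unfold base; f_equal; ring.
Qed.

Lemma base_opp1_pos q y : 0 < q -> 0 < base q (-1) y <-> y < 1.
Proof.
  intros Hq; unfold base; split; intros Hy.
  - destruct (Rlt_dec y 1) as [H|H]; [exact H|].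
    pose proof (rpow_le_compat 1 y q Hq ltac:(lra)); rewrite rpow_1_l in *; lra.
  - pose proof (rpow_lt_1 y q Hq Hy); lra.
Qed.

Lemma sin_pq_F_pq p q y : 0 < q -> 0 <= y < 1 -> sin_pq p q (F_pq p q y) = y.
Proof.
  intros Hq Hy; unfold sin_pq.
  match goal with |- epsilon ?i ?P = _ => pose proof (epsilon_spec i P) as Hspec;
    set (z := epsilon i P) in * end.
  destruct Hspec as [Hz Hfz]; [now exists y|]; rewrite !F_pq_Fint in Hfz.
  apply (Fint_inj q (-1) (- (1 / p)) Hq); [apply base_opp1_pos; lra.. | exact Hfz].
Qed.

Lemma sinh_pq_G_pq p q y : 0 < q -> 0 <= y -> sinh_pq p q (G_pq p q y) = y.
Proof.
  intros Hq Hy; unfold sinh_pq.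
  match goal with |- epsilon ?i ?P = _ => pose proof (epsilon_spec i P) as Hspec;
    set (z := epsilon i P) in * end.
  destruct Hspec as [Hz Hfz]; [now exists y|]; rewrite !G_pq_Fint in Hfz.
  apply (Fint_inj q 1 (- (1 / p)) Hq); [apply base_1_pos.. | exact Hfz].
Qed.

Lemma lt_half_pi_pq p q (x : R) : Rbar_lt x (half_pi_pq p q) ->
  exists y, 0 <= y < 1 /\ x < F_pq p q y.
Proof.
  intros Hx; apply NNPP; intros Hnot.
  destruct (Lub_Rbar_correct (fun z => exists y, 0 <= y < 1 /\ z = F_pq p q y)) as [_ Hlub].
  apply (Rbar_lt_not_le _ _ Hx), Hlub; intros z [y [Hy ->]]; simpl.
  apply Rnot_lt_le; intros Hlt; apply Hnot; now exists y.
Qed.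

Theorem theorem3p5 (p q : R) (hq : 0 < q) (hp : q / (q + 1) < p) :
  (forall x : R, 0 < x -> Rbar_lt (Finite x) (half_pi_pq p q) ->
     sin_pq p q x / x <
     rpow ((p + r_pq p q * rpow (cos_pq p q x) p) / (p + r_pq p q)) (1 / q)) /\
  (forall x : R, 0 < x -> Rbar_lt (Finite x) (half_pi_pq (r_pq p q) q) ->
     sinh_pq p q x / x <
     rpow ((p + r_pq p q * rpow (cosh_pq p q x) p) / (p + r_pq p q)) (1 / q)).
Proof.
  split; intros x Hx Hlt; destruct (lt_half_pi_pq _ q x Hlt) as [y0 [Hy0 Hxy0]].
  - rewrite F_pq_Fint in Hxy0.
    destruct (Fint_ivt q (-1) (- (1 / p)) hq x y0) as [s [Hs <-]];
      [lra | now apply base_opp1_pos |].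
    apply ratio_lt_cos_bound; try (lra || assumption).
    + intros y Hy Hby; rewrite <- F_pq_Fint; apply sin_pq_F_pq; [exact hq|].
      split; [exact Hy | now apply (base_opp1_pos q)].
    + apply base_opp1_pos; lra.
  - rewrite F_pq_Fint, <- (Fint_hmap p q hq hp) in Hxy0 by (try apply base_opp1_pos; lra).
    destruct (Fint_ivt q 1 (- (1 / p)) hq x (hmap q (-1) y0)) as [s [Hs <-]];
      [lra | apply base_1_pos |].
    apply ratio_lt_cos_bound; try (lra || assumption || apply base_1_pos).
    intros y Hy _; rewrite <- G_pq_Fint; now apply sinh_pq_G_pq.
Qed.
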